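(* Let $T\in V$ be a target variable. If $\zeta_T=n$ (i.e. $T\in\Upsilon_i$ for all $i$) and the family $\{\Upsilon_1\setminus\{T\},\dots,\Upsilon_n\setminus\{T\}\}$ is conservative, then $\bigcup_{i=1}^{n}MB_i(T)=ch(T)\cup sp(T)$.
   Context: Let $G=(V,E)$ be a DAG (causal Bayesian network) over a finite set $V$ of random variables with joint distribution $P$ satisfying the Markov condition with respect to $G$; causal sufficiency is assumed. For $X\in V$, $pa(X)$ and $ch(X)$ are the parents and children of $X$ in $G$, $sp(X)=\big(\bigcup_{Y\in ch(X)}pa(Y)\big)\setminus\{X\}$ is the set of spouses, and $MB(X)=pa(X)\cup ch(X)\cup sp(X)$ is the Markov blanket. There are $n\ge 1$ intervention experiments; in the $i$-th, the set $\Upsilon_i\subseteq V$ is manipulated. The post-intervention DAG is $G_i=(V,E_i)$ with $E_i=\{(a,b)\in E: b\notin\Upsilon_i\}$, with distribution $P_i(V)=\prod_{V_j\notin\Upsilon_i}P(V_j\mid pa(V_j))\prod_{V_j\in\Upsilon_i}P_i(V_j)$, and $D_i$ is a dataset drawn from $P_i$. It is assumed that each $P_i$ is faithful to $G_i$ and that conditional independence tests on $D_i$ are reliable (return exactly the conditional independences of $P_i$). $MB_i(T)$ denotes the Markov blanket of $T$ found in $D_i$, i.e. the set of parents, children and spouses of $T$ in $G_i$. $\zeta_T=|\{i:T\in\Upsilon_i\}|$. A family $\{A_1,\dots,A_n\}$ of subsets of $V$ is called conservative if for every $V_j\in\bigcup_{i=1}^n A_i$ there exists $i$ with $V_j\notin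 A_i$. *)

From mathcomp Require Import all_boot.
Set Implicit Arguments. Unset Strict Implicit. Unset Printing Implicit Defensive.

(* A directed graph on a finite vertex set V is an edge relation E : rel V,
   with E a b meaning there is an edge a -> b. *)
Section Graphs.
Variable V : finType.

Definition dag (E : rel V) : Prop := forall a b, E a b -> ~~ connect E b a.

Definition pa (E : rel V) (X : V) : {set V} := [set Y | E Y X].
Definition ch (E : rel V) (X : V) : {set V} := [set Y | E X Y].
Definition sp (E : rel V) (X : V) : {set V} :=
  (\bigcup_(Y in ch E X) pa E Y) :\ X.
Definition MB (E : rel V) (X : V) : {set V} := pa E X :|: ch E X :|: sp E X.

(* post-intervention graph: remove all edges into manipulated variables *)
Definition intervene (E : rel V) (U : {set V}) : rel V :=
  fun a b => E a b && (b \notin U).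

Definition zeta (n : nat) (Ups : 'I_n -> {set V}) (T : V) : nat :=
  #|[set i | T \in Ups i]|.

Definition conservative (n : nat) (A : 'I_n -> {set V}) : Prop :=
  forall v, v \in \bigcup_(i < n) A i -> exists i, v \notin A i.
End Graphs.

(* MB_i(T): Markov blanket of T found in D_i, i.e. in the graph G_i *)
Definition MB_i (V : finType) (E : rel V) (n : nat) (Ups : 'I_n -> {set V})
  (i : 'I_n) (T : V) : {set V} := MB (intervene E (Ups i)) T.

From mathcomp Require Import all_boot.

Set Implicit Arguments. Unset Strict Implicit. Unset Printing Implicit Defensive.

(* Since T is manipulated in experiment i, in G_i it has no parents, its
   children are its children in G outside Ups_i, and its spouses are the
   parents (in G) of those children.  A child of T differs from T by
   acyclicity, so conservativeness lets it escape manipulation in some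
   experiment; hence the union over all experiments recovers every child and
   every spouse of T. *)

Lemma zeta_eq_card_in (V : finType) n (Ups : 'I_n -> {set V}) T :
  zeta Ups T = n -> forall i, T \in Ups i.
Proof.
move=> hzeta i; suff hall : [set i | T \in Ups i] = setT.
  by have := in_setT i; rewrite -hall inE.
by apply/eqP; rewrite eqEcard subsetT cardsT card_ord -{1}hzeta /zeta leqnn.
Qed.

Lemma conservative_setD1_notin (V : finType) n (A : 'I_n -> {set V}) T Y :
  0 < n -> conservative (fun i => A i :\ T) -> Y != T ->
  exists i, Y \notin A i.
Proof.
move=> hn hcons hYT.
have [/hcons [i] | hY] := boolP (Y \in \bigcup_(i < n) (A i :\ T)).
  by rewrite !inE hYT; exists i.
exists (Ordinal hn); apply: contra hY => hA.
by apply/bigcupP; exists (Ordinal hn); rewrite // !inE hYT.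
Qed.

Section Intervention.
Variables (V : finType) (E : rel V).

Lemma dag_irrefl : dag E -> forall X, ~~ E X X.
Proof. by move=> hdag X; apply/negP => /hdag; rewrite connect0. Qed.

Variable U : {set V}.

Lemma pa_intervene X : pa (intervene E U) X = if X \in U then set0 else pa E X.
Proof.
by apply/setP => Y; case: ifP => hX; rewrite !inE /intervene hX ?andbF ?andbT.
Qed.

Lemma ch_intervene X : ch (intervene E U) X = ch E X :\: U.
Proof. by apply/setP => Y; rewrite !inE /intervene andbC. Qed.

Lemma sp_intervene X :
  sp (intervene E U) X = (\bigcup_(Y in ch E X :\: U) pa E Y) :\ X.
Proof.
rewrite /sp ch_intervene; congr (_ :\ X).
by apply: eq_bigr => Y; rewrite inE pa_intervene => /andP [/negPf ->].
Qed.

Lemma MB_intervene_manipulated X : X \in U ->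
  MB (intervene E U) X = (ch E X :\: U) :|: sp (intervene E U) X.
Proof. by move=> hX; rewrite /MB pa_intervene ch_intervene hX set0U. Qed.

End Intervention.

Section Cover.
Variables (I V W : finType) (A : {set V}) (U : I -> {set V}).
Hypothesis cover : forall y, y \in A -> exists i, y \notin U i.

Lemma bigcup_setD_cover : \bigcup_i (A :\: U i) = A.
Proof.
apply/setP => y; apply/bigcupP/idP => [[i _] | hy]; first by case/setDP.
by have [i hi] := cover hy; exists i; rewrite // inE hi.
Qed.

Lemma bigcup_bigcup_setD_cover (F : V -> {set W}) :
  \bigcup_i \bigcup_(y in A :\: U i) F y = \bigcup_(y in A) F y.
Proof.
apply/setP => z; apply/bigcupP/bigcupP => [[i _ /bigcupP [y]] | [y hy hz]].
  by case/setDP => hy _ hz; exists y.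
have [i hi] := cover hy.
by exists i => //; apply/bigcupP; exists y; rewrite // inE hi.
Qed.

End Cover.

Lemma bigcup_setDl (I V : finType) (P : pred I) (F : I -> {set V})
    (B : {set V}) :
  \bigcup_(i | P i) (F i :\: B) = (\bigcup_(i | P i) F i) :\: B.
Proof.
apply/setP => x; rewrite inE.
apply/bigcupP/andP => [[i Pi] | [xB /bigcupP [i Pi]]].
  by case/setDP => xF xB; split=> //; apply/bigcupP; exists i.
by exists i; rewrite // inE xB.
Qed.

Theorem theorem8 (V : finType) (E : rel V) (hdag : dag E)
  (n : nat) (hn : 0 < n) (Ups : 'I_n -> {set V}) (T : V)
  (hzeta : zeta Ups T = n)
  (hcons : conservative (fun i => Ups i :\ T)) :
  \bigcup_(i < n) MB_i E Ups i T = ch E T :|: sp E T.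
Proof.
have manipulated := zeta_eq_card_in hzeta.
have cover Y : Y \in ch E T -> exists i, Y \notin Ups i.
  rewrite inE => hTY; apply: conservative_setD1_notin hn hcons _.
  by apply: contraTneq hTY => ->; apply: dag_irrefl.
rewrite /MB_i; under eq_bigr => i _ do
  rewrite MB_intervene_manipulated ?manipulated // sp_intervene.
rewrite big_split /= bigcup_setDl bigcup_setD_cover //.
by rewrite bigcup_bigcup_setD_cover.
Qed.
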